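(* Let $\|\cdot\|$ be a strictly convex norm on $\mathbb R^2$ that is $C^1$ on $\mathbb R^2\setminus\{0\}$. Given $\xi=\gamma(\theta_0)\in\partial\mathsf B$, define $\Phi^\xi:\partial\mathsf B\to\mathbb R^2$ by \[\Phi^\xi(z)=\mathbf 1_{z\cdot i\gamma(\theta_0)>0}\,\gamma'(\theta_0)=\mathbf 1_{z\cdot i\xi>0}\,i\,n_{\mathsf B}(\xi).\] Then there exists a uniformly bounded family $\{\Phi^\xi_\delta\}_{\delta>0}\subset\mathrm{ENT}$ such that $\Phi^\xi_\delta(z)\to\Phi^\xi(z)$ as $\delta\to0$ for every $z\in\partial\mathsf B$.
   Context: $\mathsf B=\{\|z\|<1\}$ normalized so that $\partial\mathsf B$ has length $2\pi$; $\gamma$ is the counterclockwise arc-length parametrization of $\partial\mathsf B$; $n_{\mathsf B}(\xi)$ is the outer unit normal to $\partial\mathsf B$ at $\xi$; $\mathbb R^2\cong\mathbb C$, $i$ is rotation by $\pi/2$. $\mathrm{ENT}=\{\Phi\in C^1(\partial\mathsf B;\mathbb R^2):\frac{d}{d\theta}\Phi(\gamma(\theta))=\lambda_\Phi(\theta)\gamma'(\theta)$ for some $\lambda_\Phi\in C^1(\mathbb R/2\pi\mathbb Z)\}$. *)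

(* concrete reals R, with Coquelicot. R^2 is modelled as R*R,
   with i acting by (a,b) |-> (-b,a). *)
From Stdlib Require Import Reals.
From Coquelicot Require Import Coquelicot.
Open Scope R_scope.

Definition pt := (R * R)%type.

Definition dot (u v : pt) : R := fst u * fst v + snd u * snd v.
Definition rot (u : pt) : pt := (- snd u, fst u).

Definition is_norm (N : pt -> R) : Prop :=
  (forall x, N x = 0 -> x = (0, 0)) /\
  (forall a x, N (a * fst x, a * snd x) = Rabs a * N x) /\
  (forall x y, N (fst x + fst y, snd x + snd y) <= N x + N y).

Definition strictly_convex (N : pt -> R) : Prop :=
  forall x y, N x = 1 -> N y = 1 -> x <> y ->
    N ((fst x + fst y) / 2, (snd x + snd y) / 2) < 1.

Definition C1_away_from_0 (N : pt -> R) : Prop :=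
  exists g1 g2 : R -> R -> R,
    forall x y, (x, y) <> (0, 0) ->
      differentiable_pt_lim (fun a b => N (a, b)) x y (g1 x y) (g2 x y) /\
      continuity_2d_pt g1 x y /\ continuity_2d_pt g2 x y.

Definition arclength_param (N : pt -> R) (gam dgam : R -> pt) : Prop :=
  (forall t, gam (t + 2 * PI) = gam t) /\
  (forall t, is_derive gam t (dgam t)) /\
  (forall t, continuous dgam t) /\
  (forall t, dot (dgam t) (dgam t) = 1) /\
  (forall z, N z = 1 <-> exists t, gam t = z) /\
  (forall s t, gam s = gam t -> exists k : Z, s - t = 2 * PI * IZR k) /\
  (forall t, 0 < dot (dgam t) (rot (gam t))).   (* counterclockwise *)

Definition C1_periodic (l : R -> R) : Prop :=
  (forall t, l (t + 2 * PI) = l t) /\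
  exists dl : R -> R, forall t, is_derive l t (dl t) /\ continuous dl t.

(* ENT: Phi in C^1(dB; R^2) with d/dtheta Phi(gam theta) = lambda(theta) gam'(theta),
   lambda in C^1(R/2piZ).  Only the values of Phi on dB matter. *)
Definition ENT (gam dgam : R -> pt) (Phi : pt -> pt) : Prop :=
  exists lam : R -> R, C1_periodic lam /\
    forall t, is_derive (fun s => Phi (gam s)) t
                        (lam t * fst (dgam t), lam t * snd (dgam t)).

Definition Phi_xi (gam dgam : R -> pt) (theta0 : R) (z : pt) : pt :=
  if Rlt_dec 0 (dot z (rot (gam theta0))) then dgam theta0 else (0, 0).

From Stdlib Require Import Reals Lra Lia ZArith ClassicalEpsilon.
From Coquelicot Require Import Coquelicot.
Open Scope R_scope.

(* Write ξ = γ(θ0) and let θ1 ∈ (θ0, θ0 + 2π) be the parameter of -ξ.  A field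
   Φ(γ(t)) := ∫_{θ0}^{t} λ γ' belongs to ENT as soon as λ is C^1 and 2π-periodic and
   ∫ λ γ' vanishes over a period.  Take for λ a C^1 bump of mass 1 just after θ0, plus
   one just before θ1, plus a correction a γ_1 + b γ_2: since ∫ γ_i γ_i' = 0 and
   ∫ γ_1 γ_2' = -∫ γ_2 γ_1' is the (positive) enclosed area, a and b can be chosen to
   make the period integral vanish.  As the bumps shrink, Φ(γ(t)) tends to γ'(θ0) for
   θ0 < t < θ1 and to γ'(θ0) + γ'(θ1) for t ≥ θ1, while a, b → 0.  Differentiability
   of the norm at ξ makes the tangent lines at ξ and -ξ coincide, and the orientation
   then forces γ'(θ1) = -γ'(θ0), so the limit is Φ^ξ. *)

(** * Calculus on the real line *)

Lemma continuous_Rplus (f g : R -> R) x :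
  continuous f x -> continuous g x -> continuous (fun s => f s + g s) x.
Proof. exact (continuous_plus f g x). Qed.

Lemma continuous_Rmult (f g : R -> R) x :
  continuous f x -> continuous g x -> continuous (fun s => f s * g s) x.
Proof. exact (continuous_mult f g x). Qed.

Lemma continuous_Rabs_comp (f : R -> R) x :
  continuous f x -> continuous (fun s => Rabs (f s)) x.
Proof. intros H. apply (continuous_comp f Rabs); auto. apply continuous_Rabs. Qed.

Lemma continuous_fst_comp (h : R -> pt) x :
  continuous h x -> continuous (fun s => fst (h s)) x.
Proof.
  intros H. apply (continuous_comp h fst); auto.
  destruct (h x). apply continuous_fst.
Qed.

Lemma continuous_snd_comp (h : R -> pt) x :
  continuous h x -> continuous (fun s => snd (h s)) x.
Proof.
  intros H. apply (continuous_comp h snd); auto.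
  destruct (h x). apply continuous_snd.
Qed.

Lemma continuous_comp_shift (f : R -> R) a x :
  continuous f (x - a) -> continuous (fun s => f (s - a)) x.
Proof.
  intros H. apply (continuous_comp (fun s => s - a) f); auto.
  apply (continuous_minus (fun s => s) (fun _ => a)); [apply continuous_id | apply continuous_const].
Qed.

Lemma is_derive_continuous (f : R -> R) x l : is_derive f x l -> continuous f x.
Proof. intros H. apply (ex_derive_continuous f). exists l. exact H. Qed.

Create HintDb rcont.
#[local] Hint Resolve continuous_Rplus continuous_Rmult continuous_Rabs_comp
  continuous_const continuous_id : rcont.

Lemma is_derive_fst (h : R -> pt) x l :
  is_derive h x l -> is_derive (fun t => fst (h t)) x (fst l).
Proof.
  intros H. apply (filterdiff_comp' h fst x (fun y => scal y l) fst H).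
  apply filterdiff_linear, is_linear_fst.
Qed.

Lemma is_derive_snd (h : R -> pt) x l :
  is_derive h x l -> is_derive (fun t => snd (h t)) x (snd l).
Proof.
  intros H. apply (filterdiff_comp' h snd x (fun y => scal y l) snd H).
  apply filterdiff_linear, is_linear_snd.
Qed.

Lemma is_derive_pair (f g : R -> R) x a b :
  is_derive f x a -> is_derive g x b -> is_derive (fun t => (f t, g t)) x (a, b).
Proof.
  intros Hf Hg. eapply filterdiff_ext_lin.
  - apply (filterdiff_comp'_2 f g (fun u v => (u, v)) x _ _ (fun u v => (u, v)) Hf Hg).
    apply filterdiff_linear, (is_linear_ext (fun t => t)); [intros []; reflexivity|].
    apply is_linear_id.
  - reflexivity.
Qed.

Lemma is_derive_shift (f : R -> R) df t T :
  is_derive f (t + T) df -> is_derive (fun s => f (s + T)) t df.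
Proof.
  intros H. rewrite <- (scal_one df).
  apply (is_derive_comp f (fun s => s + T)); auto.
  auto_derive; auto.
Qed.

Lemma is_derive_Rmult (f g : R -> R) t df dg :
  is_derive f t df -> is_derive g t dg -> is_derive (fun s => f s * g s) t (df * g t + f t * dg).
Proof.
  intros Hf Hg. apply is_derive_Reals in Hf, Hg. apply is_derive_Reals.
  apply (derivable_pt_lim_mult f g); auto.
Qed.

Lemma is_derive_sq_Rmax0 y : is_derive (fun y => Rmax 0 y ^ 2) y (2 * Rmax 0 y).
Proof.
  apply is_derive_Reals. destruct (Rtotal_order y 0) as [Hy | [Hy | Hy]].
  - rewrite Rmax_left by lra.
    apply (derivable_pt_lim_locally_ext (fun _ => 0) _ y (y - 1) 0); [lra| |].
    + intros z Hz. rewrite Rmax_left by lra. simpl. ring.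
    + replace (2 * 0) with 0 by ring. apply derivable_pt_lim_const.
  - subst y. rewrite Rmax_left by lra. replace (2 * 0) with 0 by ring.
    intros eps Heps. exists (mkposreal eps Heps). intros h Hh0 Hh. simpl in Hh.
    rewrite Rplus_0_l, (Rmax_left 0 0), Rminus_0_r by lra.
    unfold Rmax. destruct (Rle_dec 0 h).
    + replace ((h ^ 2 - 0 ^ 2) / h) with h by (field; auto). exact Hh.
    + replace ((0 ^ 2 - 0 ^ 2) / h) with 0 by (field; auto). rewrite Rabs_R0. lra.
  - rewrite Rmax_right by lra.
    apply (derivable_pt_lim_locally_ext (fun y => y ^ 2) _ y 0 (y + 1)); [lra| |].
    + intros z Hz. rewrite Rmax_right by lra. reflexivity.
    + replace (2 * y) with (INR 2 * y ^ (2 - 1)) by (simpl; ring).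
      apply derivable_pt_lim_pow.
Qed.

Lemma is_derive_pos_right (f : R -> R) x l :
  is_derive f x l -> 0 < l -> exists h0, 0 < h0 /\ forall h, 0 < h < h0 -> f x < f (x + h).
Proof.
  intros H Hl. apply is_derive_Reals in H.
  destruct (H (l / 2) ltac:(lra)) as [d Hd].
  exists d. split; [apply cond_pos|]. intros h Hh.
  assert (Hq : l / 2 < (f (x + h) - f x) / h).
  { specialize (Hd h ltac:(lra) ltac:(rewrite Rabs_right; lra)).
    apply Rabs_lt_between in Hd. lra. }
  replace (f (x + h)) with (f x + (f (x + h) - f x) / h * h) by (field; lra). nra.
Qed.

Lemma pos_until_next_zero (g : R -> R) a b l :
  (forall x, continuous g x) -> g a = 0 -> is_derive g a l -> 0 < l ->
  (forall t, a < t < b -> g t <> 0) -> forall t, a < t < b -> 0 < g t.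
Proof.
  intros Hc Ha Hd Hl Hz t Ht.
  destruct (Rlt_le_dec 0 (g t)) as [|Hneg]; auto. exfalso.
  destruct (is_derive_pos_right g a l Hd Hl) as [h0 [Hh0 Hh]].
  set (h := Rmin (h0 / 2) ((t - a) / 2)).
  assert (0 < h) by (apply Rmin_pos; lra).
  assert (h <= h0 / 2) by apply Rmin_l. assert (h <= (t - a) / 2) by apply Rmin_r.
  assert (Hgh : 0 < g (a + h)) by (rewrite <- Ha; apply Hh; lra).
  destruct (IVT_gen_consistent g (a + h) t 0 Hc) as [s [Hs Hgs]].
  - rewrite Rmin_right, Rmax_left; lra.
  - rewrite Rmin_left, Rmax_right in Hs by lra.
    apply (Hz s); [lra | exact Hgs].
Qed.

Lemma ex_RInt_cont (f : R -> R) a b : (forall x, continuous f x) -> ex_RInt f a b.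
Proof. intros H. apply (ex_RInt_continuous (V := R_CompleteNormedModule)). auto. Qed.

Lemma RInt_ext_R (f g : R -> R) a b : (forall x, f x = g x) -> RInt f a b = RInt g a b.
Proof. intros H. apply RInt_ext. auto. Qed.

Lemma RInt_Rplus (f g : R -> R) a b :
  (forall x, continuous f x) -> (forall x, continuous g x) ->
  RInt (fun x => f x + g x) a b = RInt f a b + RInt g a b.
Proof.
  intros Hf Hg.
  exact (RInt_plus (V := R_CompleteNormedModule) f g a b
           (ex_RInt_cont f a b Hf) (ex_RInt_cont g a b Hg)).
Qed.

Lemma RInt_Rscal (k : R) (f : R -> R) a b :
  (forall x, continuous f x) -> RInt (fun x => k * f x) a b = k * RInt f a b.
Proof.
  intros Hf. exact (RInt_scal (V := R_CompleteNormedModule) f a b k (ex_RInt_cont f a b Hf)).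
Qed.

Lemma RInt_Chasles_cont (f : R -> R) a b c :
  (forall x, continuous f x) -> RInt f a b + RInt f b c = RInt f a c.
Proof.
  intros H. apply (RInt_Chasles (V := R_CompleteNormedModule)); apply ex_RInt_cont; auto.
Qed.

Lemma RInt_zero_on (f : R -> R) a b :
  (forall x, Rmin a b < x < Rmax a b -> f x = 0) -> RInt f a b = 0.
Proof.
  intros H. rewrite (RInt_ext f (fun _ => 0)) by auto.
  rewrite RInt_const. unfold scal; simpl; unfold mult; simpl. ring.
Qed.

Lemma RInt_derive_cont (F f : R -> R) a b :
  (forall x, is_derive F x (f x)) -> (forall x, continuous f x) -> RInt f a b = F b - F a.
Proof.
  intros Hd Hc. apply is_RInt_unique.
  exact (is_RInt_derive (V := R_CompleteNormedModule) F f a b (fun x _ => Hd x) (fun x _ => Hc x)).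
Qed.

Lemma is_derive_RInt_cont (f : R -> R) a t :
  (forall x, continuous f x) -> is_derive (fun t => RInt f a t) t (f t).
Proof.
  intros Hc. apply (is_derive_RInt f _ a t); auto.
  exists (mkposreal 1 Rlt_0_1). intros y _.
  apply (RInt_correct (V := R_CompleteNormedModule)), ex_RInt_cont; auto.
Qed.

Lemma abs_RInt_weighted_le (f w : R -> R) a b t :
  a <= t <= b -> (forall x, continuous f x) -> (forall x, continuous w x) ->
  (forall x, Rabs (w x) <= 1) ->
  Rabs (RInt (fun s => f s * w s) a t) <= RInt (fun s => Rabs (f s)) a b.
Proof.
  intros Ht Hf Hw Hw1.
  assert (Hfa : forall x, continuous (fun s => Rabs (f s)) x) by auto with rcont.
  apply Rle_trans with (RInt (fun s => Rabs (f s)) a t).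
  - eapply Rle_trans; [apply abs_RInt_le; [lra | apply ex_RInt_cont; auto with rcont]|].
    apply RInt_le; try lra; try apply ex_RInt_cont; auto with rcont.
    intros x _. rewrite Rabs_mult. specialize (Hw1 x).
    pose proof (Rabs_pos (f x)). nra.
  - pose proof (RInt_Chasles_cont (fun s : R => Rabs (f s)) a t b Hfa) as Hsplit.
    assert (0 <= RInt (fun s => Rabs (f s)) t b).
    { apply RInt_ge_0; [lra | apply ex_RInt_cont; auto | intros; apply Rabs_pos]. }
    lra.
Qed.

Lemma RInt_average_close (m w : R -> R) a b p e :
  a <= b -> (forall x, continuous m x) -> (forall x, continuous w x) ->
  (forall x, 0 <= m x) -> RInt m a b = 1 ->
  (forall s, a <= s <= b -> Rabs (w s - p) <= e) ->
  Rabs (RInt (fun s => m s * w s) a b - p) <= e.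
Proof.
  intros Hab Hm Hw Hm0 Hm1 Hclose.
  assert (Hdev : forall x, continuous (fun s => m s * (w s + - p)) x) by auto with rcont.
  assert (Hshift : @eq R (RInt (fun s => m s * (w s + - p)) a b)
                         (RInt (fun s => m s * w s) a b - p)).
  { rewrite (RInt_ext_R _ (fun s => m s * w s + - p * m s)) by (intros; ring).
    rewrite RInt_Rplus, RInt_Rscal, Hm1 by auto with rcont. ring. }
  rewrite <- Hshift.
  eapply Rle_trans; [apply abs_RInt_le; [lra | apply ex_RInt_cont; auto]|].
  apply Rle_trans with (RInt (fun s => e * m s) a b).
  - apply RInt_le; try lra; try apply ex_RInt_cont; auto with rcont.
    intros x Hx. rewrite Rabs_mult, Rabs_right by (apply Rle_ge; auto).
    rewrite Rmult_comm. apply Rmult_le_compat_r; auto. apply Hclose; lra.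
  - rewrite RInt_Rscal, Hm1 by auto. lra.
Qed.

Lemma zero_derivative_const (H : R -> R) : (forall x, is_derive H x 0) -> forall a b, H a = H b.
Proof.
  intros Hd a b.
  pose proof (RInt_derive_cont H (fun _ => 0) a b Hd (fun x => continuous_const 0 x)) as E.
  rewrite RInt_zero_on in E by auto. lra.
Qed.

Lemma periodic_shift_Z {A : Type} (f : R -> A) T :
  (forall s, f (s + T) = f s) -> forall k s, f (s + T * IZR k) = f s.
Proof.
  intros Hp k. induction k as [| k IH | k IH] using Z.peano_ind; intros s.
  - rewrite Rmult_0_r, Rplus_0_r. reflexivity.
  - rewrite succ_IZR, <- (IH s), <- (Hp (s + T * IZR k)). f_equal. ring.
  - rewrite <- Z.sub_1_r, minus_IZR, <- (IH s), <- (Hp (s + T * (IZR k - 1))). f_equal. ring.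
Qed.

Lemma exists_shift_into_period (c t : R) :
  exists k : Z, c <= t + 2 * PI * IZR k < c + 2 * PI.
Proof.
  pose proof PI_RGT_0. set (x := (t - c) / (2 * PI)).
  destruct (archimed x) as [Hup1 Hup2].
  exists (1 - up x)%Z. rewrite minus_IZR.
  assert (Et : t = c + 2 * PI * x) by (unfold x; field; lra).
  rewrite Et. split; nra.
Qed.

Lemma periodic_derivative (f df : R -> R) T :
  (forall s, f (s + T) = f s) -> (forall t, is_derive f t (df t)) ->
  forall t, df (t + T) = df t.
Proof.
  intros Hp Hd t.
  assert (H : is_derive f t (df (t + T))).
  { apply (is_derive_ext (fun s => f (s + T))); auto. apply is_derive_shift, Hd. }
  apply is_derive_unique in H. rewrite (is_derive_unique _ _ _ (Hd t)) in H. auto.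
Qed.

Lemma RInt_periodic_primitive (f : R -> R) a T :
  (forall x, continuous f x) -> (forall s, f (s + T) = f s) -> RInt f a (a + T) = 0 ->
  forall t, RInt f a (t + T) = RInt f a t.
Proof.
  intros Hc Hp H0 t.
  assert (Hd : forall x, is_derive (fun t => RInt f a (t + T) - RInt f a t) x 0).
  { intros x. replace 0 with (f (x + T) - f x) by (rewrite Hp; ring).
    apply (is_derive_minus (fun t => RInt f a (t + T)) (fun t => RInt f a t)).
    - apply is_derive_shift, is_derive_RInt_cont; auto.
    - apply is_derive_RInt_cont; auto. }
  pose proof (zero_derivative_const _ Hd t a) as E. cbv beta in E.
  rewrite H0, RInt_point in E. change (RInt f a (t + T) - RInt f a t = 0 - 0) in E. lra.
Qed.

Lemma RInt_derivative_periodic (F f : R -> R) a T :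
  (forall s, F (s + T) = F s) -> (forall x, is_derive F x (f x)) -> (forall x, continuous f x) ->
  RInt f a (a + T) = 0 :> R.
Proof. intros Hp Hd Hc. rewrite (RInt_derive_cont F f) by auto. rewrite Hp. ring. Qed.

Lemma RInt_periodic_product (f g df dg : R -> R) a T :
  (forall s, f (s + T) = f s) -> (forall s, g (s + T) = g s) ->
  (forall x, is_derive f x (df x)) -> (forall x, is_derive g x (dg x)) ->
  (forall x, continuous df x) -> (forall x, continuous dg x) ->
  RInt (fun s => f s * dg s) a (a + T) + RInt (fun s => g s * df s) a (a + T) = 0.
Proof.
  intros Hfp Hgp Hf Hg Hdf Hdg.
  assert (Hfc : forall x, continuous f x) by (intros x; exact (is_derive_continuous _ _ _ (Hf x))).
  assert (Hgc : forall x, continuous g x) by (intros x; exact (is_derive_continuous _ _ _ (Hg x))).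
  rewrite <- RInt_Rplus by auto with rcont.
  apply (RInt_derivative_periodic (fun s => f s * g s)); auto with rcont.
  - intros s. rewrite Hfp, Hgp. reflexivity.
  - intros x. cbv beta. replace (f x * dg x + g x * df x) with (df x * g x + f x * dg x) by ring.
    apply is_derive_Rmult; auto.
Qed.

Lemma ball_R (x y eps : R) : ball x eps y <-> Rabs (y - x) < eps.
Proof. reflexivity. Qed.

Lemma at_right_0_of (P : R -> Prop) eps :
  0 < eps -> (forall r, 0 < r < eps -> P r) -> at_right 0 P.
Proof.
  intros He HP. exists (mkposreal eps He). intros r Hr Hpos. apply HP. split; auto.
  apply (proj1 (ball_R 0 r eps)) in Hr. rewrite Rminus_0_r, Rabs_right in Hr by lra. exact Hr.
Qed.

Lemma filterlim_Rplus {T} {F : (T -> Prop) -> Prop} {FF : Filter F} (f g : T -> R) a b :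
  filterlim f F (locally a) -> filterlim g F (locally b) ->
  filterlim (fun x => f x + g x) F (locally (a + b)).
Proof. intros Hf Hg. exact (filterlim_comp_2 f g Rplus Hf Hg (filterlim_plus a b)). Qed.

Lemma filterlim_Rmult {T} {F : (T -> Prop) -> Prop} {FF : Filter F} (f g : T -> R) a b :
  filterlim f F (locally a) -> filterlim g F (locally b) ->
  filterlim (fun x => f x * g x) F (locally (a * b)).
Proof. intros Hf Hg. exact (filterlim_comp_2 f g Rmult Hf Hg (filterlim_mult a b)). Qed.

Lemma filterlim_at_right_Rmin {U} {G : (U -> Prop) -> Prop} (f : R -> U) D :
  0 < D -> filterlim f (at_right 0) G -> filterlim (fun d => f (Rmin d D)) (at_right 0) G.
Proof.
  intros HD Hf. apply (filterlim_ext_loc f); auto.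
  apply (at_right_0_of _ D HD). intros d Hd. rewrite Rmin_left by lra. reflexivity.
Qed.

Lemma filterlim_pair_locally {T} {F : (T -> Prop) -> Prop} {FF : Filter F} (f g : T -> R) a b :
  filterlim f F (locally a) -> filterlim g F (locally b) ->
  filterlim (fun x => (f x, g x)) F (locally (a, b)).
Proof.
  intros Hf Hg P [eps HP]. unfold filtermap.
  apply (filter_imp (fun x => ball a eps (f x) /\ ball b eps (g x))).
  - intros x [H1 H2]. apply HP. split; auto.
  - apply filter_and; [apply Hf | apply Hg]; apply locally_ball.
Qed.

Lemma continuous_Rmax0 (f : R -> R) x : continuous f x -> continuous (fun s => Rmax 0 (f s)) x.
Proof.
  intros Hf.
  assert (E : forall s, (f s + Rabs (f s)) * / 2 = Rmax 0 (f s)).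
  { intros s. unfold Rmax. destruct (Rle_dec 0 (f s)).
    - rewrite Rabs_right by lra. field.
    - rewrite Rabs_left by lra. field. }
  apply (continuous_ext _ _ x E). auto with rcont.
Qed.

(** * Periodic C^1 bumps *)

Lemma cos_plus_2PI x : cos (x + 2 * PI) = cos x.
Proof. rewrite cos_plus, cos_2PI, sin_2PI. ring. Qed.

Definition bump (r x : R) : R := Rmax 0 (cos x - cos r) ^ 2.
Definition dbump (r x : R) : R := 2 * Rmax 0 (cos x - cos r) * - sin x.
Definition bump_mass (r : R) : R := RInt (bump r) (- r) r.
Definition nbump (r x : R) : R := / bump_mass r * bump r x.
Definition dnbump (r x : R) : R := / bump_mass r * dbump r x.

Lemma is_derive_bump r x : is_derive (bump r) x (dbump r x).
Proof.
  unfold dbump. rewrite Rmult_comm.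
  apply (is_derive_comp (fun y => Rmax 0 y ^ 2) (fun x => cos x - cos r)).
  - apply is_derive_sq_Rmax0.
  - auto_derive; auto. ring.
Qed.

Lemma continuous_dbump r x : continuous (dbump r) x.
Proof.
  unfold dbump. apply continuous_Rmult; [apply continuous_Rmult|].
  - apply continuous_const.
  - apply continuous_Rmax0. apply (continuous_minus cos (fun _ => cos r)).
    + apply continuity_pt_filterlim, continuity_cos.
    + apply continuous_const.
  - apply (continuous_opp sin). apply continuity_pt_filterlim, continuity_sin.
Qed.

Lemma continuous_bump r x : continuous (bump r) x.
Proof. exact (is_derive_continuous _ _ _ (is_derive_bump r x)). Qed.

Lemma bump_nonneg r x : 0 <= bump r x.
Proof. apply pow2_ge_0. Qed.

Lemma bump_periodic r x : bump r (x + 2 * PI) = bump r x.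
Proof. unfold bump. rewrite cos_plus_2PI. reflexivity. Qed.

Lemma cos_Rabs x : cos (Rabs x) = cos x.
Proof. unfold Rabs. destruct (Rcase_abs x); [apply cos_neg | reflexivity]. Qed.

Lemma bump_vanish r x : 0 < r <= PI -> r <= Rabs x <= 2 * PI - r -> bump r x = 0.
Proof.
  intros Hr Hx. unfold bump. rewrite <- cos_Rabs.
  assert (Hcos : cos (Rabs x) <= cos r).
  { destruct (Rle_dec (Rabs x) PI).
    - apply cos_decr_1; lra.
    - replace (cos r) with (cos (2 * PI - r)).
      + apply cos_incr_1; lra.
      + rewrite <- cos_neg, <- cos_plus_2PI. f_equal. ring. }
  rewrite Rmax_left by lra. simpl. ring.
Qed.

Lemma bump_pos r x : 0 < r <= PI -> Rabs x < r -> 0 < bump r x.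
Proof.
  intros Hr Hx. unfold bump. rewrite <- cos_Rabs.
  assert (Hcos : cos r < cos (Rabs x)) by (apply cos_decreasing_1; pose proof (Rabs_pos x); lra).
  rewrite Rmax_right by lra. apply pow_lt. lra.
Qed.

Lemma bump_mass_pos r : 0 < r <= PI -> 0 < bump_mass r.
Proof.
  intros Hr. apply RInt_gt_0; [lra | | intros; apply continuous_bump].
  intros x Hx. apply bump_pos; auto. apply Rabs_def1; lra.
Qed.

Lemma is_derive_nbump r x : is_derive (nbump r) x (dnbump r x).
Proof. exact (is_derive_scal (bump r) x (/ bump_mass r) _ (is_derive_bump r x)). Qed.

Lemma continuous_dnbump r x : continuous (dnbump r) x.
Proof. apply continuous_Rmult; [apply continuous_const | apply continuous_dbump]. Qed.

Lemma continuous_nbump r x : continuous (nbump r) x.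
Proof. exact (is_derive_continuous _ _ _ (is_derive_nbump r x)). Qed.

Lemma continuous_nbump_shift r a x : continuous (fun s => nbump r (s - a)) x.
Proof. apply continuous_comp_shift, continuous_nbump. Qed.

Lemma nbump_nonneg r x : 0 < r <= PI -> 0 <= nbump r x.
Proof.
  intros Hr. apply Rmult_le_pos; [| apply bump_nonneg].
  apply Rlt_le, Rinv_0_lt_compat, bump_mass_pos; auto.
Qed.

Lemma nbump_vanish r x : 0 < r <= PI -> r <= Rabs x <= 2 * PI - r -> nbump r x = 0.
Proof. intros Hr Hx. unfold nbump. rewrite bump_vanish by auto. ring. Qed.

Lemma RInt_nbump_shift r a : 0 < r <= PI -> RInt (fun s => nbump r (s - a)) (a - r) (a + r) = 1.
Proof.
  intros Hr.
  pose proof (RInt_comp_lin (nbump r) 1 (- a) (a - r) (a + r)) as E.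
  replace (1 * (a - r) + - a) with (- r) in E by ring.
  replace (1 * (a + r) + - a) with r in E by ring.
  transitivity (RInt (nbump r) (- r) r).
  { rewrite <- E by apply ex_RInt_cont, continuous_nbump. apply RInt_ext. intros x _.
    unfold scal; simpl; unfold mult; simpl. rewrite Rmult_1_l. f_equal. ring. }
  unfold nbump. rewrite RInt_Rscal by apply continuous_bump.
  apply Rinv_l. apply Rgt_not_eq, bump_mass_pos; auto.
Qed.

Lemma RInt_nbump_outside (w : R -> R) a r u v :
  0 < r <= PI -> u <= v -> (forall s, u <= s <= v -> r <= Rabs (s - a) <= 2 * PI - r) ->
  RInt (fun s => nbump r (s - a) * w s) u v = 0.
Proof.
  intros Hr Huv Hout. apply RInt_zero_on. intros s Hs.
  rewrite Rmin_left, Rmax_right in Hs by lra.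
  rewrite nbump_vanish by (auto; apply Hout; lra). ring.
Qed.

Lemma RInt_nbump_window (w : R -> R) a r u v :
  0 < r <= PI -> (forall x, continuous w x) ->
  a - 2 * PI + r <= u <= a - r -> a + r <= v <= a + 2 * PI - r ->
  RInt (fun s => nbump r (s - a) * w s) u v = RInt (fun s => nbump r (s - a) * w s) (a - r) (a + r).
Proof.
  intros Hr Hw Hu Hv.
  assert (Hc : forall x, continuous (fun s : R => nbump r (s - a) * w s) x).
  { intros x. apply continuous_Rmult; [apply continuous_nbump_shift | auto]. }
  rewrite <- (RInt_Chasles_cont _ u (a - r) v Hc), <- (RInt_Chasles_cont _ (a - r) (a + r) v Hc).
  rewrite (RInt_nbump_outside w a r u (a - r)), (RInt_nbump_outside w a r (a + r) v); auto; try lra.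
  - intros s Hs. rewrite Rabs_right by lra. lra.
  - intros s Hs. rewrite Rabs_left1 by lra. lra.
Qed.

Lemma nbump_average_lim (w a : R -> R) a0 :
  (forall x, continuous w x) -> (forall r, 0 < r -> Rabs (a r - a0) <= 2 * r) ->
  filterlim (fun r => RInt (fun s => nbump r (s - a r) * w s) (a r - r) (a r + r))
            (at_right 0) (locally (w a0)).
Proof.
  intros Hw Ha. apply filterlim_locally. intros eps.
  destruct (proj1 (filterlim_locally _ _) (Hw a0) (pos_div_2 eps)) as [del Hdel].
  apply (at_right_0_of _ (Rmin (del / 3) PI)).
  { apply Rmin_pos; [pose proof (cond_pos del) | apply PI_RGT_0]; lra. }
  intros r [Hr0 Hr]. pose proof (Rmin_l (del / 3) PI). pose proof (Rmin_r (del / 3) PI).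
  specialize (Ha r Hr0). apply Rabs_le_between in Ha.
  apply ball_R. eapply Rle_lt_trans; [| apply (Rlt_eps2_eps eps (cond_pos eps))].
  apply RInt_average_close.
  - lra.
  - intros x. apply continuous_nbump_shift.
  - auto.
  - intros x. apply nbump_nonneg. lra.
  - apply RInt_nbump_shift. lra.
  - intros s Hs. apply Rlt_le, ball_R, Hdel, ball_R. apply Rabs_def1; lra.
Qed.

Section Weight.

Variables c th1 : R.
Hypothesis Hth1 : c < th1 < c + 2 * PI.

(* Modulo 2π the two bumps live in (c + r, c + 3r) and (th1 - 3r, th1 - r). *)
Definition weight (r s : R) : R := nbump r (s - (c + 2 * r)) + nbump r (s - (th1 - 2 * r)).
Definition dweight (r s : R) : R := dnbump r (s - (c + 2 * r)) + dnbump r (s - (th1 - 2 * r)).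

Lemma weight_periodic r s : weight r (s + 2 * PI) = weight r s.
Proof.
  unfold weight, nbump. replace (s + 2 * PI - (c + 2 * r)) with (s - (c + 2 * r) + 2 * PI) by ring.
  replace (s + 2 * PI - (th1 - 2 * r)) with (s - (th1 - 2 * r) + 2 * PI) by ring.
  rewrite !bump_periodic. reflexivity.
Qed.

Lemma is_derive_weight r s : is_derive (weight r) s (dweight r s).
Proof.
  unfold weight, dweight. apply (is_derive_plus (fun s => nbump r (s - (c + 2 * r)))
    (fun s => nbump r (s - (th1 - 2 * r)))); apply is_derive_shift, is_derive_nbump.
Qed.

Lemma continuous_dweight r s : continuous (dweight r) s.
Proof.
  unfold dweight. apply continuous_Rplus; apply continuous_comp_shift, continuous_dnbump.
Qed.

Lemma continuous_weight r s : continuous (weight r) s.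
Proof. exact (is_derive_continuous _ _ _ (is_derive_weight r s)). Qed.

Lemma weight_nonneg r s : 0 < r <= PI -> 0 <= weight r s.
Proof.
  intros Hr. unfold weight.
  pose proof (nbump_nonneg r (s - (c + 2 * r)) Hr). pose proof (nbump_nonneg r (s - (th1 - 2 * r)) Hr).
  lra.
Qed.

Lemma RInt_leading_bump_lim (w : R -> R) t :
  (forall x, continuous w x) -> c <= t <= c + 2 * PI ->
  filterlim (fun r => RInt (fun s => nbump r (s - (c + 2 * r)) * w s) c t)
            (at_right 0) (locally (if Rlt_dec c t then w c else 0)).
Proof.
  intros Hw Ht. pose proof PI_RGT_0. destruct (Rlt_dec c t) as [Hct | Hct].
  - eapply filterlim_ext_loc;
      [| apply (nbump_average_lim w (fun r => c + 2 * r) c Hw);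
         intros r Hr; rewrite Rabs_right by lra; lra].
    apply (at_right_0_of _ (Rmin ((t - c) / 3) 1)); [apply Rmin_pos; lra|].
    intros r [Hr0 Hr]. pose proof (Rmin_l ((t - c) / 3) 1). pose proof (Rmin_r ((t - c) / 3) 1).
    symmetry. apply RInt_nbump_window; auto; lra.
  - replace t with c by lra.
    apply (filterlim_ext (fun _ => 0)); [| apply filterlim_const].
    intros r. symmetry. exact (RInt_point c (fun s : R => nbump r (s - (c + 2 * r)) * w s)).
Qed.

Lemma RInt_trailing_bump_lim (w : R -> R) t :
  (forall x, continuous w x) -> c <= t <= c + 2 * PI ->
  filterlim (fun r => RInt (fun s => nbump r (s - (th1 - 2 * r)) * w s) c t)
            (at_right 0) (locally (if Rle_dec th1 t then w th1 else 0)).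
Proof.
  intros Hw Ht. pose proof PI_RGT_0. destruct (Rle_dec th1 t) as [Htt | Htt].
  - eapply filterlim_ext_loc;
      [| apply (nbump_average_lim w (fun r => th1 - 2 * r) th1 Hw);
         intros r Hr; rewrite Rabs_left by lra; lra].
    apply (at_right_0_of _ (Rmin ((th1 - c) / 3) 1)); [apply Rmin_pos; lra|].
    intros r [Hr0 Hr]. pose proof (Rmin_l ((th1 - c) / 3) 1). pose proof (Rmin_r ((th1 - c) / 3) 1).
    symmetry. apply RInt_nbump_window; auto; lra.
  - apply (filterlim_ext_loc (fun _ => 0)); [| apply filterlim_const].
    apply (at_right_0_of _ (Rmin ((th1 - t) / 3) 1)); [apply Rmin_pos; lra|].
    intros r [Hr0 Hr]. pose proof (Rmin_l ((th1 - t) / 3) 1). pose proof (Rmin_r ((th1 - t) / 3) 1).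
    symmetry. apply RInt_nbump_outside; try lra.
    intros s Hs. rewrite Rabs_left by lra. lra.
Qed.

Lemma weight_integral_lim (w : R -> R) t :
  (forall x, continuous w x) -> c <= t <= c + 2 * PI ->
  filterlim (fun r => RInt (fun s => weight r s * w s) c t) (at_right 0)
    (locally ((if Rlt_dec c t then w c else 0) + (if Rle_dec th1 t then w th1 else 0))).
Proof.
  intros Hw Ht.
  apply (filterlim_ext (fun r => RInt (fun s => nbump r (s - (c + 2 * r)) * w s) c t
                               + RInt (fun s => nbump r (s - (th1 - 2 * r)) * w s) c t)).
  - intros r. unfold weight. rewrite <- RInt_Rplus.
    + apply RInt_ext_R. intros x. ring.
    + intros x. apply continuous_Rmult; [apply continuous_nbump_shift | auto].
    + intros x. apply continuous_Rmult; [apply continuous_nbump_shift | auto].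
  - apply filterlim_Rplus; [apply RInt_leading_bump_lim | apply RInt_trailing_bump_lim]; auto.
Qed.

Lemma RInt_weight_mass r : 0 < r <= (th1 - c) / 3 -> RInt (weight r) c (c + 2 * PI) = 2.
Proof.
  intros Hr. pose proof PI_RGT_0.
  assert (Hmass : forall a, a - 2 * PI + r <= c <= a - r -> a + r <= c + 2 * PI <= a + 2 * PI - r ->
            RInt (fun s => nbump r (s - a) * 1) c (c + 2 * PI) = 1).
  { intros a Hc1 Hc2. rewrite RInt_nbump_window by (auto using continuous_const; lra).
    etransitivity; [| apply (RInt_nbump_shift r a); lra]. apply RInt_ext_R. intros x. ring. }
  unfold weight. rewrite (RInt_ext_R _ (fun s => nbump r (s - (c + 2 * r)) * 1
                                               + nbump r (s - (th1 - 2 * r)) * 1)).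
  - rewrite RInt_Rplus, !Hmass; try lra; intros x;
      apply continuous_Rmult; auto using continuous_nbump_shift, continuous_const.
  - intros x. ring.
Qed.

End Weight.

(** * The unit sphere near ξ and -ξ *)

Lemma level_set_tangent (N : pt -> R) (s1 s2 : R -> R) t p q d1 d2 :
  differentiable_pt_lim (fun a b => N (a, b)) (s1 t) (s2 t) p q ->
  is_derive s1 t d1 -> is_derive s2 t d2 -> (forall t, N (s1 t, s2 t) = 1) ->
  p * d1 + q * d2 = 0.
Proof.
  intros Hdiff H1 H2 Hlevel. apply is_derive_Reals in H1, H2.
  apply (uniqueness_limite (fun t => N (s1 t, s2 t)) t).
  - exact (derivable_pt_lim_comp_2d (fun a b => N (a, b)) s1 s2 t p q d1 d2 Hdiff H1 H2).
  - apply (derivable_pt_lim_locally_ext (fun _ => 1) _ t (t - 1) (t + 1)); [lra | auto |].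
    apply derivable_pt_lim_const.
Qed.

Lemma norm_scal_neg (N : pt -> R) z : is_norm N -> N (- fst z, - snd z) = N z.
Proof.
  intros [_ [Hh _]]. pose proof (Hh (-1) z) as E. rewrite Rabs_m1, Rmult_1_l in E.
  rewrite <- E. f_equal; f_equal; ring.
Qed.

Lemma norm_euler_identity (N : pt -> R) x y p q :
  is_norm N -> N (x, y) = 1 -> differentiable_pt_lim (fun a b => N (a, b)) x y p q ->
  p * x + q * y = 1.
Proof.
  intros [_ [Hh _]] H1 Hdiff.
  apply (uniqueness_limite (fun a => N (a * x, a * y)) 1).
  - apply (derivable_pt_lim_comp_2d (fun a b => N (a, b)) (fun a => a * x) (fun a => a * y)).
    + rewrite !Rmult_1_l. exact Hdiff.
    + apply is_derive_Reals. auto_derive; auto. ring.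
    + apply is_derive_Reals. auto_derive; auto. ring.
  - apply (derivable_pt_lim_locally_ext (fun a => a) _ 1 0 2); [lra | | apply derivable_pt_lim_id].
    intros a Ha. pose proof (Hh a (x, y)) as E. simpl in E. rewrite E, H1, Rabs_right by lra. ring.
Qed.

Lemma same_normal_unit_opposite (p q e1 e2 f1 f2 v1 v2 : R) :
  p <> 0 \/ q <> 0 -> p * e1 + q * e2 = 0 -> p * f1 + q * f2 = 0 ->
  e1 * e1 + e2 * e2 = 1 -> f1 * f1 + f2 * f2 = 1 ->
  0 < e1 * v1 + e2 * v2 -> f1 * v1 + f2 * v2 < 0 -> f1 = - e1 /\ f2 = - e2.
Proof.
  intros Hpq He Hf Ue Uf Hev Hfv.
  assert (Hcross : e1 * f2 - e2 * f1 = 0).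
  { destruct Hpq as [Hp | Hq].
    - apply (Rmult_eq_reg_l p); [| exact Hp]. replace (p * (e1 * f2 - e2 * f1)) with
        (f2 * (p * e1 + q * e2) - e2 * (p * f1 + q * f2)) by ring. rewrite He, Hf. ring.
    - apply (Rmult_eq_reg_l q); [| exact Hq]. replace (q * (e1 * f2 - e2 * f1)) with
        (e1 * (p * f1 + q * f2) - f1 * (p * e1 + q * e2)) by ring. rewrite He, Hf. ring. }
  set (k := e1 * f1 + e2 * f2).
  assert (F1 : f1 = k * e1).
  { apply Rminus_diag_uniq. replace (f1 - k * e1) with
      (- e2 * (e1 * f2 - e2 * f1) + f1 * (1 - (e1 * e1 + e2 * e2))) by (unfold k; ring).
    rewrite Hcross, Ue. ring. }
  assert (F2 : f2 = k * e2).
  { apply Rminus_diag_uniq. replace (f2 - k * e2) with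
      (e1 * (e1 * f2 - e2 * f1) + f2 * (1 - (e1 * e1 + e2 * e2))) by (unfold k; ring).
    rewrite Hcross, Ue. ring. }
  assert (Hk : k * k = 1).
  { rewrite F1, F2 in Uf. replace (k * e1 * (k * e1) + k * e2 * (k * e2))
      with (k * k * (e1 * e1 + e2 * e2)) in Uf by ring. rewrite Ue in Uf. lra. }
  assert (Hkneg : k < 0).
  { rewrite F1, F2 in Hfv. replace (k * e1 * v1 + k * e2 * v2)
      with (k * (e1 * v1 + e2 * v2)) in Hfv by ring. nra. }
  assert (Hm : k = -1) by nra.
  rewrite F1, F2, Hm. split; ring.
Qed.

Lemma collinear_of_dot_rot_zero (z u : pt) :
  u <> (0, 0) -> dot z (rot u) = 0 ->
  z = (dot z u / dot u u * fst u, dot z u / dot u u * snd u).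
Proof.
  destruct z as [z1 z2], u as [u1 u2]. unfold dot, rot. simpl. intros Hu Hz.
  assert (Hpos : 0 < u1 * u1 + u2 * u2).
  { destruct (Req_dec u1 0) as [E1 | E1]; [destruct (Req_dec u2 0) as [E2 | E2] |].
    - exfalso. apply Hu. subst. reflexivity.
    - pose proof (Rsqr_pos_lt u2 E2). unfold Rsqr in *. nra.
    - pose proof (Rsqr_pos_lt u1 E1). unfold Rsqr in *. nra. }
  assert (Hz' : z1 * u2 = z2 * u1) by lra.
  f_equal; field_simplify_eq; try lra.
  - pose proof (f_equal (Rmult u2) Hz'). nra.
  - pose proof (f_equal (Rmult u1) Hz'). nra.
Qed.

Lemma is_derive_dot (h : R -> pt) (v : pt) t l :
  is_derive h t l -> is_derive (fun s => dot (h s) v) t (dot l v).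
Proof.
  intros H. unfold dot.
  apply (is_derive_plus (fun s => fst (h s) * fst v) (fun s => snd (h s) * snd v)).
  - exact (is_derive_scal_l (fun s => fst (h s)) t (fst l) (fst v) (is_derive_fst h t l H)).
  - exact (is_derive_scal_l (fun s => snd (h s)) t (snd l) (snd v) (is_derive_snd h t l H)).
Qed.

Definition tangent_step (dgam : R -> pt) (c th1 t : R) : pt :=
  if Rlt_dec c t then if Rlt_dec t th1 then dgam c else (0, 0) else (0, 0).

Section Antipode.

Variables (N : pt -> R) (gam dgam : R -> pt) (c p q : R).
Hypothesis Hnorm : is_norm N.
Hypothesis Hper : forall t, gam (t + 2 * PI) = gam t.
Hypothesis Hder : forall t, is_derive gam t (dgam t).
Hypothesis Hunit : forall t, dot (dgam t) (dgam t) = 1.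
Hypothesis Hsphere : forall z, N z = 1 <-> exists t, gam t = z.
Hypothesis Hinj : forall s t, gam s = gam t -> exists k : Z, s - t = 2 * PI * IZR k.
Hypothesis Hccw : forall t, 0 < dot (dgam t) (rot (gam t)).
Hypothesis Hdiff : differentiable_pt_lim (fun a b => N (a, b)) (fst (gam c)) (snd (gam c)) p q.

Lemma norm_gam t : N (gam t) = 1.
Proof. apply Hsphere. exists t. reflexivity. Qed.

Lemma gam_neq_0 t : gam t <> (0, 0).
Proof.
  intros E. destruct Hnorm as [_ [Hh _]]. pose proof (Hh 0 (gam t)) as H0.
  rewrite E, Rabs_R0, Rmult_0_l in H0. simpl in H0. rewrite Rmult_0_l in H0.
  pose proof (norm_gam t) as H1. rewrite E in H1. lra.
Qed.

Lemma param_unique_in_period s t :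
  c <= s < c + 2 * PI -> c <= t < c + 2 * PI -> gam s = gam t -> s = t.
Proof.
  intros Hs Ht E. pose proof PI_RGT_0. destruct (Hinj s t E) as [k Hk].
  assert (Hk1 : -1 < IZR k < 1) by (split; apply (Rmult_lt_reg_l (2 * PI)); lra).
  destruct Hk1 as [Hk1 Hk2]. apply lt_IZR in Hk1, Hk2.
  replace k with 0%Z in Hk by lia. simpl in Hk. lra.
Qed.

Lemma antipode_param : exists th1, c < th1 < c + 2 * PI /\ gam th1 = (- fst (gam c), - snd (gam c)).
Proof.
  assert (Hanti : N (- fst (gam c), - snd (gam c)) = 1)
    by (rewrite norm_scal_neg; auto; apply norm_gam).
  destruct (proj1 (Hsphere _) Hanti) as [t0 Ht0].
  destruct (exists_shift_into_period c t0) as [k Hk].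
  exists (t0 + 2 * PI * IZR k).
  assert (E : gam (t0 + 2 * PI * IZR k) = (- fst (gam c), - snd (gam c))).
  { rewrite (periodic_shift_Z gam (2 * PI) Hper). exact Ht0. }
  split; [split | exact E]; try lra.
  destruct (Rle_lt_or_eq_dec _ _ (proj1 Hk)) as [Hlt | Heq]; auto. exfalso.
  apply (gam_neq_0 c). rewrite <- Heq in E. destruct (gam c) as [x y]. simpl in E.
  injection E. intros. f_equal; lra.
Qed.

Variable th1 : R.
Hypothesis Hth1 : c < th1 < c + 2 * PI.
Hypothesis Hanti : gam th1 = (- fst (gam c), - snd (gam c)).

Lemma dot_rot_zero_in_period t :
  c <= t < c + 2 * PI -> dot (gam t) (rot (gam c)) = 0 -> t = c \/ t = th1.
Proof.
  intros Ht Hz. pose proof (collinear_of_dot_rot_zero _ _ (gam_neq_0 c) Hz) as E.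
  set (mu := dot (gam t) (gam c) / dot (gam c) (gam c)) in E.
  assert (Hmu : Rabs mu = 1).
  { destruct Hnorm as [_ [Hh _]]. rewrite <- (norm_gam t), E, Hh. rewrite norm_gam. ring. }
  revert Hmu. unfold Rabs. destruct (Rcase_abs mu); intros Hmu.
  - right. apply param_unique_in_period; try lra.
    rewrite E, Hanti. replace mu with (-1) by lra. f_equal; ring.
  - left. apply param_unique_in_period; try lra.
    rewrite E, Hmu, !Rmult_1_l. symmetry. apply surjective_pairing.
Qed.

Lemma dgam_antipode : dgam th1 = (- fst (dgam c), - snd (dgam c)).
Proof.
  assert (Hlevel : forall t, N (fst (gam t), snd (gam t)) = 1).
  { intros t. rewrite <- surjective_pairing. apply norm_gam. }
  assert (Hlevel' : forall t, N (- fst (gam t), - snd (gam t)) = 1).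
  { intros t. rewrite norm_scal_neg by auto. apply norm_gam. }
  assert (He : p * fst (dgam c) + q * snd (dgam c) = 0).
  { apply (level_set_tangent N (fun t => fst (gam t)) (fun t => snd (gam t)) c); auto;
      [apply is_derive_fst | apply is_derive_snd]; auto. }
  assert (Hf : p * - fst (dgam th1) + q * - snd (dgam th1) = 0).
  { apply (level_set_tangent N (fun t => - fst (gam t)) (fun t => - snd (gam t)) th1); auto.
    - rewrite Hanti. simpl. rewrite !Ropp_involutive. exact Hdiff.
    - apply (is_derive_opp (fun t => fst (gam t))), is_derive_fst; auto.
    - apply (is_derive_opp (fun t => snd (gam t))), is_derive_snd; auto. }
  assert (Hpq : p <> 0 \/ q <> 0).
  { pose proof (norm_euler_identity N _ _ p q Hnorm (Hlevel c) Hdiff).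
    destruct (Req_dec p 0); [right; intros ->| left]; auto. subst. lra. }
  assert (Hccw_th1 := Hccw th1). rewrite Hanti in Hccw_th1.
  destruct (same_normal_unit_opposite p q (fst (dgam c)) (snd (dgam c)) (fst (dgam th1))
              (snd (dgam th1)) (- snd (gam c)) (fst (gam c))) as [E1 E2]; auto; try lra.
  - apply Hunit.
  - apply Hunit.
  - apply (Hccw c).
  - unfold dot, rot in Hccw_th1. simpl in Hccw_th1. lra.
  - rewrite <- E1, <- E2. apply surjective_pairing.
Qed.

Lemma dot_rot_sign_in_period :
  (forall t, c < t < th1 -> 0 < dot (gam t) (rot (gam c))) /\
  (forall t, th1 <= t < c + 2 * PI -> dot (gam t) (rot (gam c)) <= 0).
Proof.
  set (g := fun t => dot (gam t) (rot (gam c))).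
  assert (Hg : forall t, is_derive g t (dot (dgam t) (rot (gam c))))
    by (intros; apply is_derive_dot; auto).
  assert (Hgc : forall t, continuous g t) by (intros t; exact (is_derive_continuous _ _ _ (Hg t))).
  assert (Hgc' : forall t, continuous (fun s => - g s) t).
  { intros t. apply (continuous_opp g). auto. }
  assert (Hg_th1 : g th1 = 0) by (unfold g, dot, rot; rewrite Hanti; simpl; ring).
  assert (Hzero : forall t, c <= t < c + 2 * PI -> g t = 0 -> t = c \/ t = th1)
    by exact dot_rot_zero_in_period.
  split.
  - apply (pos_until_next_zero g c th1 (dot (dgam c) (rot (gam c))) Hgc).
    + unfold g, dot, rot. simpl. ring.
    + apply Hg.
    + apply Hccw.
    + intros t Ht Hgt. destruct (Hzero t ltac:(lra) Hgt); lra.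
  - intros t Ht. change (g t <= 0). destruct (Req_dec t th1) as [-> | Hne]; [lra|].
    enough (0 < - g t) by lra.
    apply (pos_until_next_zero (fun s => - g s) th1 (c + 2 * PI)
             (- dot (dgam th1) (rot (gam c))) Hgc'); try lra.
    + apply (is_derive_opp g), Hg.
    + pose proof (Hccw th1) as H. rewrite Hanti in H. unfold dot, rot in *. simpl in *. lra.
    + intros s Hs Hgs. destruct (Hzero s ltac:(lra) ltac:(lra)); lra.
Qed.

Lemma Phi_xi_in_period t :
  c <= t < c + 2 * PI -> Phi_xi gam dgam c (gam t) = tangent_step dgam c th1 t.
Proof.
  intros Ht. destruct dot_rot_sign_in_period as [Hpos Hneg].
  unfold Phi_xi, tangent_step. destruct (Rlt_dec c t) as [Hct | Hct].
  - destruct (Rlt_dec t th1) as [Htt | Htt].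
    + destruct (Rlt_dec 0 _) as [_ | Hd]; [reflexivity | exfalso; apply Hd, Hpos; lra].
    + destruct (Rlt_dec 0 _) as [Hd | _]; [| reflexivity].
      specialize (Hneg t ltac:(lra)). lra.
  - replace t with c by lra. destruct (Rlt_dec 0 _) as [Hd | _]; [| reflexivity].
    unfold dot, rot in Hd. simpl in Hd. lra.
Qed.

End Antipode.

(** * The approximating fields *)

Section Construction.

Variables (gam dgam : R -> pt) (c th1 : R).
Hypothesis Hper : forall t, gam (t + 2 * PI) = gam t.
Hypothesis Hder : forall t, is_derive gam t (dgam t).
Hypothesis Hdcont : forall t, continuous dgam t.
Hypothesis Hunit : forall t, dot (dgam t) (dgam t) = 1.
Hypothesis Hinj : forall s t, gam s = gam t -> exists k : Z, s - t = 2 * PI * IZR k.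
Hypothesis Hccw : forall t, 0 < dot (dgam t) (rot (gam t)).
Hypothesis Hth1 : c < th1 < c + 2 * PI.
Hypothesis Hdanti : dgam th1 = (- fst (dgam c), - snd (dgam c)).

Lemma continuous_fst_gam t : continuous (fun s => fst (gam s)) t.
Proof. exact (is_derive_continuous _ _ _ (is_derive_fst gam t _ (Hder t))). Qed.

Lemma continuous_snd_gam t : continuous (fun s => snd (gam s)) t.
Proof. exact (is_derive_continuous _ _ _ (is_derive_snd gam t _ (Hder t))). Qed.

Lemma continuous_fst_dgam t : continuous (fun s => fst (dgam s)) t.
Proof. apply continuous_fst_comp, Hdcont. Qed.

Lemma continuous_snd_dgam t : continuous (fun s => snd (dgam s)) t.
Proof. apply continuous_snd_comp, Hdcont. Qed.

#[local] Hint Resolve continuous_fst_gam continuous_snd_gam continuous_fst_dgam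
  continuous_snd_dgam : rcont.

Lemma dgam_periodic t : dgam (t + 2 * PI) = dgam t.
Proof.
  rewrite (surjective_pairing (dgam (t + 2 * PI))), (surjective_pairing (dgam t)).
  f_equal; [apply (periodic_derivative (fun s => fst (gam s)) (fun s => fst (dgam s)))
           | apply (periodic_derivative (fun s => snd (gam s)) (fun s => snd (dgam s)))];
    intros; rewrite ?Hper; auto using is_derive_fst, is_derive_snd.
Qed.

Definition enclosed_area : R := RInt (fun s => fst (gam s) * snd (dgam s)) c (c + 2 * PI).

Lemma curve_moments :
  0 < enclosed_area /\
  RInt (fun s => snd (gam s) * fst (dgam s)) c (c + 2 * PI) = - enclosed_area /\
  RInt (fun s => fst (gam s) * fst (dgam s)) c (c + 2 * PI) = 0 /\
  RInt (fun s => snd (gam s) * snd (dgam s)) c (c + 2 * PI) = 0.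
Proof.
  pose proof PI_RGT_0. unfold enclosed_area.
  assert (Hfst_per : forall s, fst (gam (s + 2 * PI)) = fst (gam s)) by (intros; rewrite Hper; auto).
  assert (Hsnd_per : forall s, snd (gam (s + 2 * PI)) = snd (gam s)) by (intros; rewrite Hper; auto).
  assert (Hfst_der : forall x, is_derive (fun s => fst (gam s)) x (fst (dgam x)))
    by auto using is_derive_fst.
  assert (Hsnd_der : forall x, is_derive (fun s => snd (gam s)) x (snd (dgam x)))
    by auto using is_derive_snd.
  pose proof (RInt_periodic_product _ _ _ _ c (2 * PI) Hfst_per Hsnd_per Hfst_der Hsnd_der
                continuous_fst_dgam continuous_snd_dgam) as Hmixed.
  pose proof (RInt_periodic_product _ _ _ _ c (2 * PI) Hfst_per Hfst_per Hfst_der Hfst_der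
                continuous_fst_dgam continuous_fst_dgam) as Hsq1.
  pose proof (RInt_periodic_product _ _ _ _ c (2 * PI) Hsnd_per Hsnd_per Hsnd_der Hsnd_der
                continuous_snd_dgam continuous_snd_dgam) as Hsq2.
  assert (Hccw_int : 0 < RInt (fun s => fst (gam s) * snd (dgam s)
                               + -1 * (snd (gam s) * fst (dgam s))) c (c + 2 * PI)).
  { apply RInt_gt_0; [lra | | intros; auto with rcont].
    intros x _. pose proof (Hccw x) as H1. unfold dot, rot in H1. simpl in H1. lra. }
  rewrite RInt_Rplus, RInt_Rscal in Hccw_int by auto with rcont.
  repeat split; lra.
Qed.

Definition weight_moment (r : R) (w : R -> R) : R :=
  RInt (fun s => weight c th1 r s * w s) c (c + 2 * PI).
Definition coef1 (r : R) : R := - weight_moment r (fun s => snd (dgam s)) / enclosed_area.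
Definition coef2 (r : R) : R := weight_moment r (fun s => fst (dgam s)) / enclosed_area.

Definition lam (r s : R) : R := weight c th1 r s + coef1 r * fst (gam s) + coef2 r * snd (gam s).
Definition dlam (r s : R) : R := dweight c th1 r s + coef1 r * fst (dgam s) + coef2 r * snd (dgam s).

Definition lam_prim (r : R) (w : R -> R) (t : R) : R := RInt (fun s => lam r s * w s) c t.

Lemma is_derive_lam r s : is_derive (lam r) s (dlam r s).
Proof.
  unfold lam, dlam. apply (is_derive_plus (fun s => weight c th1 r s + coef1 r * fst (gam s))).
  - apply (is_derive_plus (weight c th1 r)); [apply is_derive_weight |].
    apply is_derive_scal, is_derive_fst, Hder.
  - apply is_derive_scal, is_derive_snd, Hder.
Qed.

Lemma continuous_lam r s : continuous (lam r) s.
Proof. exact (is_derive_continuous _ _ _ (is_derive_lam r s)). Qed.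

#[local] Hint Resolve continuous_lam : rcont.

Lemma lam_C1_periodic r : C1_periodic (lam r).
Proof.
  split.
  - intros t. unfold lam. rewrite weight_periodic, Hper. reflexivity.
  - exists (dlam r). intros t. split; [apply is_derive_lam |].
    unfold dlam.
    apply continuous_Rplus; [apply continuous_Rplus |]; auto using continuous_dweight with rcont.
Qed.

Lemma is_derive_lam_prim r (w : R -> R) t :
  (forall x, continuous w x) -> is_derive (lam_prim r w) t (lam r t * w t).
Proof. intros Hw. apply (is_derive_RInt_cont (fun s => lam r s * w s)). auto with rcont. Qed.

Lemma lam_prim_split r (w : R -> R) t :
  (forall x, continuous w x) ->
  lam_prim r w t = RInt (fun s => weight c th1 r s * w s) c t
               + coef1 r * RInt (fun s => fst (gam s) * w s) c t
               + coef2 r * RInt (fun s => snd (gam s) * w s) c t.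
Proof.
  intros Hw. pose proof continuous_weight.
  unfold lam_prim, lam. rewrite <- !RInt_Rscal, <- !RInt_Rplus by auto with rcont.
  apply RInt_ext_R. intros s. ring.
Qed.

Lemma lam_prim_closed r :
  lam_prim r (fun s => fst (dgam s)) (c + 2 * PI) = 0 /\
  lam_prim r (fun s => snd (dgam s)) (c + 2 * PI) = 0.
Proof.
  destruct curve_moments as [Harea [H21 [H11 H22]]].
  rewrite !lam_prim_split by auto with rcont.
  fold (weight_moment r (fun s => fst (dgam s))) (weight_moment r (fun s => snd (dgam s))).
  change (RInt (fun s => fst (gam s) * snd (dgam s)) c (c + 2 * PI)) with enclosed_area.
  rewrite H21, H11, H22. unfold coef1, coef2. split; field; lra.
Qed.

Lemma lam_prim_periodic r (w : R -> R) :
  (forall x, continuous w x) -> (forall s, w (s + 2 * PI) = w s) -> lam_prim r w (c + 2 * PI) = 0 ->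
  forall t, lam_prim r w (t + 2 * PI) = lam_prim r w t.
Proof.
  intros Hw Hwp Hclosed. apply RInt_periodic_primitive; auto with rcont.
  intros s. rewrite Hwp. unfold lam. rewrite weight_periodic, Hper. reflexivity.
Qed.

Lemma lam_prim_jump_lim (w : R -> R) t :
  (forall x, continuous w x) -> c <= t <= c + 2 * PI ->
  filterlim (fun r => lam_prim r w t) (at_right 0)
    (locally ((if Rlt_dec c t then w c else 0) + (if Rle_dec th1 t then w th1 else 0))).
Proof.
  intros Hw Ht. pose proof PI_RGT_0. destruct curve_moments as [Harea _].
  assert (Hmoment : forall v : R -> R, (forall x, continuous v x) -> v th1 = - v c ->
            filterlim (fun r => weight_moment r v) (at_right 0) (locally 0)).
  { intros v Hv Hvanti. replace (locally 0) with (locally ((if Rlt_dec c (c + 2 * PI) then v c else 0)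
                                        + (if Rle_dec th1 (c + 2 * PI) then v th1 else 0))).
    - unfold weight_moment. apply (weight_integral_lim c th1 Hth1 v (c + 2 * PI)); auto; lra.
    - f_equal. destruct (Rlt_dec c (c + 2 * PI)), (Rle_dec th1 (c + 2 * PI)); lra. }
  assert (Hcoef : forall (k : R) (v : R -> R), (forall x, continuous v x) -> v th1 = - v c ->
            filterlim (fun r => k * weight_moment r v) (at_right 0) (locally 0)).
  { intros k v Hv Hvanti. replace (locally 0) with (locally (k * 0)) by (f_equal; ring).
    apply filterlim_Rmult; [apply filterlim_const | auto]. }
  apply (filterlim_ext (fun r => RInt (fun s => weight c th1 r s * w s) c t
           + (- / enclosed_area) * weight_moment r (fun s => snd (dgam s))
             * RInt (fun s => fst (gam s) * w s) c t
           + / enclosed_area * weight_moment r (fun s => fst (dgam s))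
             * RInt (fun s => snd (gam s) * w s) c t)).
  { intros r. rewrite lam_prim_split by auto. unfold coef1, coef2. field. lra. }
  set (L := (if Rlt_dec c t then w c else 0) + (if Rle_dec th1 t then w th1 else 0)).
  replace (locally L) with (locally (L + 0 * RInt (fun s => fst (gam s) * w s) c t
                                      + 0 * RInt (fun s => snd (gam s) * w s) c t)) by (f_equal; ring).
  apply filterlim_Rplus; [apply filterlim_Rplus |].
  - apply (weight_integral_lim c th1 Hth1 w t); auto.
  - apply filterlim_Rmult; [| apply filterlim_const].
    apply Hcoef; auto with rcont. rewrite Hdanti. reflexivity.
  - apply filterlim_Rmult; [| apply filterlim_const].
    apply Hcoef; auto with rcont. rewrite Hdanti. reflexivity.
Qed.

Lemma lam_prim_step_lim t :
  c <= t < c + 2 * PI ->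
  filterlim (fun r => (lam_prim r (fun s => fst (dgam s)) t, lam_prim r (fun s => snd (dgam s)) t))
            (at_right 0) (locally (tangent_step dgam c th1 t)).
Proof.
  intros Ht.
  replace (tangent_step dgam c th1 t) with
    ((if Rlt_dec c t then fst (dgam c) else 0) + (if Rle_dec th1 t then fst (dgam th1) else 0),
     (if Rlt_dec c t then snd (dgam c) else 0) + (if Rle_dec th1 t then snd (dgam th1) else 0)).
  - apply filterlim_pair_locally; apply lam_prim_jump_lim; auto with rcont; lra.
  - unfold tangent_step. rewrite Hdanti. simpl.
    destruct (Rlt_dec c t); destruct (Rlt_dec t th1); destruct (Rle_dec th1 t); try lra;
      rewrite ?Rplus_0_r; f_equal; ring || (rewrite (surjective_pairing (dgam c)); f_equal; ring).
Qed.

Lemma abs_dgam_components_le t : Rabs (fst (dgam t)) <= 1 /\ Rabs (snd (dgam t)) <= 1.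
Proof. pose proof (Hunit t) as H. unfold dot in H. split; apply Rabs_le; nra. Qed.

Lemma RInt_abs_weight r :
  0 < r <= (th1 - c) / 3 -> RInt (fun s => Rabs (weight c th1 r s)) c (c + 2 * PI) = 2.
Proof.
  intros Hr. pose proof PI_RGT_0.
  transitivity (RInt (weight c th1 r) c (c + 2 * PI)); [| apply RInt_weight_mass; auto].
  apply RInt_ext_R. intros s. apply Rabs_right, Rle_ge, weight_nonneg. lra.
Qed.

Lemma abs_coef_le r :
  0 < r <= (th1 - c) / 3 -> Rabs (coef1 r) <= 2 / enclosed_area /\ Rabs (coef2 r) <= 2 / enclosed_area.
Proof.
  intros Hr. destruct curve_moments as [Harea _].
  assert (Hm : forall v : R -> R, (forall x, continuous v x) -> (forall x, Rabs (v x) <= 1) ->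
            Rabs (weight_moment r v) <= 2).
  { intros v Hv Hv1. rewrite <- (RInt_abs_weight r Hr). unfold weight_moment.
    apply abs_RInt_weighted_le; auto using continuous_weight; pose proof PI_RGT_0; lra. }
  unfold coef1, coef2, Rdiv. rewrite !Rabs_mult, Rabs_Ropp, Rabs_inv, (Rabs_right enclosed_area) by lra.
  pose proof (Rinv_0_lt_compat _ Harea).
  split; apply Rmult_le_compat_r; try lra; apply Hm; auto with rcont;
    intros x; apply abs_dgam_components_le.
Qed.

Definition lam_prim_bound : R :=
  2 + 2 / enclosed_area * (RInt (fun s => Rabs (fst (gam s))) c (c + 2 * PI)
                          + RInt (fun s => Rabs (snd (gam s))) c (c + 2 * PI)).

Lemma abs_lam_prim_le r (w : R -> R) t :
  0 < r <= (th1 - c) / 3 -> c <= t <= c + 2 * PI ->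
  (forall x, continuous w x) -> (forall x, Rabs (w x) <= 1) ->
  Rabs (lam_prim r w t) <= lam_prim_bound.
Proof.
  intros Hr Ht Hw Hw1. destruct (abs_coef_le r Hr) as [Ha Hb].
  pose proof (abs_RInt_weighted_le _ w c (c + 2 * PI) t Ht (continuous_weight c th1 r) Hw Hw1)
    as Hweight.
  rewrite RInt_abs_weight in Hweight by auto.
  pose proof (abs_RInt_weighted_le _ w c (c + 2 * PI) t Ht continuous_fst_gam Hw Hw1) as H1.
  pose proof (abs_RInt_weighted_le _ w c (c + 2 * PI) t Ht continuous_snd_gam Hw Hw1) as H2.
  rewrite lam_prim_split by auto. unfold lam_prim_bound.
  eapply Rle_trans; [apply Rabs_triang|]. eapply Rle_trans; [apply Rplus_le_compat_r, Rabs_triang|].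
  rewrite !Rabs_mult.
  pose proof (Rabs_pos (coef1 r)). pose proof (Rabs_pos (coef2 r)).
  pose proof (Rabs_pos (RInt (fun s => fst (gam s) * w s) c t)).
  pose proof (Rabs_pos (RInt (fun s => snd (gam s) * w s) c t)).
  assert (Rabs (coef1 r) * Rabs (RInt (fun s => fst (gam s) * w s) c t)
          <= 2 / enclosed_area * RInt (fun s => Rabs (fst (gam s))) c (c + 2 * PI))
    by (apply Rmult_le_compat; auto).
  assert (Rabs (coef2 r) * Rabs (RInt (fun s => snd (gam s) * w s) c t)
          <= 2 / enclosed_area * RInt (fun s => Rabs (snd (gam s))) c (c + 2 * PI))
    by (apply Rmult_le_compat; auto).
  lra.
Qed.

Lemma lam_prim_dgam_periodic r t :
  lam_prim r (fun s => fst (dgam s)) (t + 2 * PI) = lam_prim r (fun s => fst (dgam s)) t /\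
  lam_prim r (fun s => snd (dgam s)) (t + 2 * PI) = lam_prim r (fun s => snd (dgam s)) t.
Proof.
  destruct (lam_prim_closed r) as [H1 H2].
  split; apply lam_prim_periodic; auto with rcont; intros s; rewrite dgam_periodic; reflexivity.
Qed.

Definition curve_param (z : pt) : R := epsilon (inhabits 0) (fun t => gam t = z).

Definition radius (d : R) : R := Rmin d ((th1 - c) / 3).

Definition Phi_delta (d : R) (z : pt) : pt :=
  (lam_prim (radius d) (fun s => fst (dgam s)) (curve_param z),
   lam_prim (radius d) (fun s => snd (dgam s)) (curve_param z)).

Lemma Phi_delta_on_curve d s :
  Phi_delta d (gam s) = (lam_prim (radius d) (fun u => fst (dgam u)) s,
                         lam_prim (radius d) (fun u => snd (dgam u)) s).
Proof.
  assert (Hparam : gam (curve_param (gam s)) = gam s).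
  { apply (epsilon_spec (inhabits 0) (fun t => gam t = gam s)). exists s. reflexivity. }
  destruct (Hinj _ _ Hparam) as [k Hk].
  pose proof (fun t => proj1 (lam_prim_dgam_periodic (radius d) t)) as P1.
  pose proof (fun t => proj2 (lam_prim_dgam_periodic (radius d) t)) as P2.
  unfold Phi_delta. replace (curve_param (gam s)) with (s + 2 * PI * IZR k) by lra.
  rewrite (periodic_shift_Z _ _ P1), (periodic_shift_Z _ _ P2). reflexivity.
Qed.

Lemma Phi_delta_ENT d : ENT gam dgam (Phi_delta d).
Proof.
  exists (lam (radius d)). split; [apply lam_C1_periodic |]. intros t.
  apply (is_derive_ext (fun s => (lam_prim (radius d) (fun s => fst (dgam s)) s,
                                  lam_prim (radius d) (fun s => snd (dgam s)) s))).
  { intros s. symmetry. apply Phi_delta_on_curve. }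
  apply is_derive_pair; apply is_derive_lam_prim; auto with rcont.
Qed.

Lemma Phi_delta_bounded d s :
  0 < d ->
  Rabs (fst (Phi_delta d (gam s))) <= lam_prim_bound /\
  Rabs (snd (Phi_delta d (gam s))) <= lam_prim_bound.
Proof.
  intros Hd. pose proof PI_RGT_0.
  destruct (exists_shift_into_period c s) as [k Hk].
  rewrite <- (periodic_shift_Z gam _ Hper k s), Phi_delta_on_curve. simpl.
  assert (Hr : 0 < radius d <= (th1 - c) / 3).
  { unfold radius. split; [apply Rmin_pos; lra | apply Rmin_r]. }
  split; apply abs_lam_prim_le; auto with rcont; try lra; intros x; apply abs_dgam_components_le.
Qed.

Lemma Phi_delta_lim t :
  c <= t < c + 2 * PI ->
  filterlim (fun d => Phi_delta d (gam t)) (at_right 0) (locally (tangent_step dgam c th1 t)).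
Proof.
  intros Ht. apply (filterlim_ext (fun d => (lam_prim (radius d) (fun s => fst (dgam s)) t,
                                            lam_prim (radius d) (fun s => snd (dgam s)) t))).
  { intros d. symmetry. apply Phi_delta_on_curve. }
  apply (filterlim_at_right_Rmin (fun r => (lam_prim r (fun s => fst (dgam s)) t,
                                            lam_prim r (fun s => snd (dgam s)) t))); [lra|].
  apply lam_prim_step_lim. exact Ht.
Qed.

End Construction.

Theorem lemma3p3 (N : pt -> R) (gam dgam : R -> pt) (theta0 : R) :
  is_norm N -> strictly_convex N -> C1_away_from_0 N ->
  arclength_param N gam dgam ->
  exists Phid : R -> pt -> pt,
    (forall d, 0 < d -> ENT gam dgam (Phid d)) /\
    (exists M : R, forall d z, 0 < d -> N z = 1 ->
        Rabs (fst (Phid d z)) <= M /\ Rabs (snd (Phid d z)) <= M) /\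
    (forall z, N z = 1 ->
        filterlim (fun d => Phid d z) (at_right 0) (locally (Phi_xi gam dgam theta0 z))).
Proof.
  intros Hnorm _ [g1 [g2 HC1]] [Hper [Hder [Hdcont [Hunit [Hsphere [Hinj Hccw]]]]]].
  assert (Hxi : (fst (gam theta0), snd (gam theta0)) <> (0, 0)).
  { rewrite <- surjective_pairing. apply (gam_neq_0 N gam); auto. }
  destruct (HC1 _ _ Hxi) as [Hdiff _].
  destruct (antipode_param N gam theta0 _ _ Hnorm Hper Hsphere Hdiff) as [th1 [Hth1 Hanti]].
  pose proof (dgam_antipode N gam dgam theta0 _ _ Hnorm Hder Hunit Hsphere Hccw Hdiff th1 Hanti).
  exists (Phi_delta gam dgam theta0 th1). split; [| split].
  - intros d _. apply Phi_delta_ENT; auto.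
  - exists (lam_prim_bound gam dgam theta0). intros d z Hd Hz.
    destruct (proj1 (Hsphere z) Hz) as [s <-]. apply Phi_delta_bounded; auto.
  - intros z Hz. destruct (proj1 (Hsphere z) Hz) as [s <-].
    destruct (exists_shift_into_period theta0 s) as [k Hk].
    rewrite <- (periodic_shift_Z gam _ Hper k s).
    rewrite (Phi_xi_in_period N gam dgam theta0 Hnorm Hder Hsphere Hinj Hccw th1 Hth1 Hanti) by lra.
    apply Phi_delta_lim; auto.
Qed.
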